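(* (Perfect soundness of the Meadows protocol.) Let a Meadows puzzle on an $n\times n$ grid be given. If the prover $P$ does not know a solution of the puzzle, then in the Meadows zero-knowledge protocol described in the context the verifier $V$ always rejects; equivalently, if $V$ accepts, then the squares printed during the protocol form a partition of the grid into squares each containing exactly one dotted cell.
   Context: Meadows puzzle: an $n\times n$ grid in which some cells $c_1,\dots,c_k$ contain a dot. A solution is a partition of the grid into squares (axis-aligned $s\times s$ blocks of cells) such that each square contains exactly one dotted cell. Cards: each card has either an integer or nothing (a blank card) on its front; all backs are indistinguishable. A pile-shifting shuffle applied to a matrix of face-down cards (entries may be equal-size stacks per row) cyclically shifts its columns by a uniformly random amount unknown to everyone. Chosen cut protocol: given face-down cards (or equal-size stacks) $c'_1,\dots,c'_q$ and a secret index $i$ chosen by $P$, $P$ forms a $3\times q$ matrix with row 1 equal to $c'_1,\dots,c'_q$, row 2 a face-down card $1$ in column $i$ and $0$ elsewhere, row 3 a card $1$ in column 1 and $0$ elsewhere (turned face-down); a pile-shifting shuffle is applied; row 2 is revealed and the card of row 1 above the $1$ is $c'_i$; after use it is put back, face-up cards are turned down, another pile-shifting shuffle is applied, row 3 is revealed and the columns are shifted cyclically so its $1$ returns to column 1. Printing protocol: given a face-down $p\times q$ template and a $p\times q$ area, each template card is placed on the corresponding area card; for each two-card stack, $P$ uses the chosen cut protocol to select a card, it is revealed, $V$ rejects unless it is blank, and it is removed. Meadows protocol: $P$ publicly puts a blank card on every cell, appends $n-1$ rows and $n-1$ columns of blank dummy cards below and to the right, and turns all cards face-down, giving a $(2n-1)\times(2n-1)$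 matrix (read row by row as a sequence). $P$ builds $n$ templates, one for each $s=1,\dots,n$: an $n\times n$ matrix whose top-left $s\times s$ block consists of cards $1$ and whose other cards are blank; $V$ checks them. For $i=1,\dots,k$: (1) via the chosen cut protocol $P$ selects the top-left card of an $n\times n$ area; (2) via the chosen cut protocol $P$ selects a template; (3) the printing protocol is applied; (4) all cards on dotted cells are revealed and $V$ rejects unless those on $c_1,\dots,c_i$ are $1$ and those on $c_{i+1},\dots,c_k$ are blank (they are then turned face-down again); (5) $P$ reconstructs a template, returns it to the pile, and $V$ checks that the pile consists of the $n$ correct templates (rejecting otherwise). Finally $P$ reveals all grid cards and $V$ rejects unless all are $1$; $P$ reveals all dummy cards and $V$ rejects unless all are blank. Otherwise $V$ accepts. *)

From mathcomp Require Import all_boot.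
Set Implicit Arguments. Unset Strict Implicit. Unset Printing Implicit Defensive.

(* A card front: [None] = blank card, [Some z] = card with integer z
   (only 1 is ever used in this protocol). *)
Definition card := option nat.
Definition blank : card := None.
Definition one : card := Some 1.

(* The (2n-1) x (2n-1) matrix of face-down cards, indexed by (row, column),
   0-based; positions outside the matrix are irrelevant. Rows/columns < n
   form the grid, the others are the dummy cards. *)
Definition cardmat := nat -> nat -> card.

Definition init_mat : cardmat := fun _ _ => blank.

Definition template (s : nat) (a b : nat) : card :=
  if (a < s) && (b < s) then one else blank.

(* The prover's choices in one iteration:
   - (mv_r, mv_c): top-left card of the n x n area (chosen cut, step 1);
   - mv_s.+1 : size of the chosen template (chosen cut, step 2);
   - mv_sel a b : in the printing protocol, for the two-card stack at
     offset (a,b) of the area, [true] = P selects (and reveals) the template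
     card, [false] = P selects (and reveals) the area card. *)
Record move (n : nat) := Move {
  mv_r : 'I_n; mv_c : 'I_n; mv_s : 'I_n; mv_sel : nat -> nat -> bool }.

(* Printing protocol: returns [None] if V rejects, otherwise the new matrix
   (the non-revealed card of every stack stays in the area). *)
Definition print (n : nat) (M : cardmat) (m : move n) : option cardmat :=
  let r := nat_of_ord (mv_r m) in
  let c := nat_of_ord (mv_c m) in
  let s := (nat_of_ord (mv_s m)).+1 in
  let revealed a b :=
    if mv_sel m a b then template s a b else M (r + a) (c + b) in
  let kept a b :=
    if mv_sel m a b then M (r + a) (c + b) else template s a b in
  if [forall a : 'I_n, forall b : 'I_n, revealed a b == blank] then
    Some (fun i j => if (r <= i < r + n) && (c <= j < c + n)
                     then kept (i - r) (j - c) else M i j)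
  else None.

(* Check (4) after iteration i (1-based): dots c_1..c_i carry card 1,
   dots c_{i+1}..c_k carry blank cards. *)
Definition dots_ok (dots : seq (nat * nat)) (i : nat) (M : cardmat) : bool :=
  [forall j : 'I_(size dots),
     M (nth (0,0) dots j).1 (nth (0,0) dots j).2
       == (if j < i then one else blank)].

Fixpoint run_from (n : nat) (dots : seq (nat * nat)) (i : nat) (M : cardmat)
    (ms : seq (move n)) : option cardmat :=
  match ms with
  | [::] => Some M
  | m :: ms' =>
      match print M m with
      | Some M' => if dots_ok dots i.+1 M' then run_from dots i.+1 M' ms'
                   else None
      | None => None
      end
  end.

Definition final_ok (n : nat) (M : cardmat) : bool :=
  [forall i : 'I_(n + n.-1), forall j : 'I_(n + n.-1),
     M i j == (if (i < n) && (j < n) then one else blank)].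

Arguments run_from : clear implicits.
Definition accepts (n : nat) (dots : seq (nat * nat)) (ms : seq (move n)) : bool :=
  (size ms == size dots) &&
  match run_from n dots 0 init_mat ms with
  | Some M => final_ok n M
  | None => false
  end.

(* A square: (top row, left column, side). *)
Definition square := (nat * nat * nat)%type.
Definition in_square (q : square) (x : nat * nat) : bool :=
  let: (r, c, s) := q in (r <= x.1 < r + s) && (c <= x.2 < c + s).

Definition printed_square n (m : move n) : square :=
  (nat_of_ord (mv_r m), nat_of_ord (mv_c m), (nat_of_ord (mv_s m)).+1).

Definition meadows_solution (n : nat) (dots : seq (nat * nat)) (sq : seq square) : Prop :=
  (forall q, q \in sq -> 0 < q.2 /\ q.1.1 + q.2 <= n /\ q.1.2 + q.2 <= n) /\
  (forall i j, i < n -> j < n -> count (fun q => in_square q (i, j)) sq = 1) /\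
  (forall q, q \in sq -> count (in_square q) dots = 1).

Arguments accepts : clear implicits.
Arguments meadows_solution : clear implicits.

(* A two-card stack passes the printing check only if the revealed card is blank, so a
   template card 1 can only be printed onto a blank card. Hence the matrix always shows
   card 1 exactly on the cells covered by the squares printed so far, and no cell is
   covered twice. The final check then says that every grid cell is covered exactly once
   and that no square reaches the dummy cards. Check (4) after iteration i says that the
   only dot whose card changed is c_i; as printing changes exactly the cards of the
   printed square, that square contains c_i and no other dot. *)
From Pilot Require Import Defs.
From mathcomp Require Import all_boot zify.
Set Implicit Arguments. Unset Strict Implicit. Unset Printing Implicit Defensive.

Lemma count_nth_eq1 (T : eqType) (x0 : T) (p : pred T) (s : seq T) (i : nat) :
  i < size s -> (forall j, j < size s -> p (nth x0 s j) = (j == i)) -> count p s = 1.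
Proof.
move=> lt_i_s p_nth; rewrite -(mkseq_nth x0 s) /mkseq count_map.
rewrite (@eq_in_count _ _ (pred1 i)); last first.
  by move=> j; rewrite mem_iota => /andP[_ lt_j]; exact: p_nth.
by rewrite count_uniq_mem ?iota_uniq // mem_iota add0n lt_i_s.
Qed.

Lemma mem_map_exists (T1 : Type) (T2 : eqType) (f : T1 -> T2) (s : seq T1) (y : T2) :
  y \in map f s -> exists x, y = f x.
Proof. by elim: s => //= x s IH; rewrite in_cons => /predU1P[->|/IH]; [exists x|]. Qed.

Section Printing.

Variables (n : nat) (M M' : cardmat) (m : move n).
Hypothesis print_m : print M m = Some M'.

Lemma print_outside_area i j :
  ~~ ((mv_r m <= i < mv_r m + n) && (mv_c m <= j < mv_c m + n)) -> M' i j = M i j.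
Proof. by move: print_m; rewrite /print; case: forallP => // _ [<-] /negbTE ->. Qed.

Lemma print_area_stack i j :
  mv_r m <= i < mv_r m + n -> mv_c m <= j < mv_c m + n ->
  let t := template (mv_s m).+1 (i - mv_r m) (j - mv_c m) in
  exists b : bool, (if b then t else M i j) = blank /\ M' i j = (if b then M i j else t).
Proof.
move=> area_i area_j; move: print_m; rewrite /print.
case: forallP => // revealed_blank [<-] /=; rewrite area_i area_j.
have a_lt_n : i - mv_r m < n by lia.
have b_lt_n : j - mv_c m < n by lia.
move: (revealed_blank (Ordinal a_lt_n)) => /forallP /(_ (Ordinal b_lt_n)) /eqP /=.
rewrite !subnKC; [|lia|lia].
by exists (mv_sel m (i - mv_r m) (j - mv_c m)).
Qed.

Lemma template_in_area i j : mv_r m <= i -> mv_c m <= j ->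
  template (mv_s m).+1 (i - mv_r m) (j - mv_c m) =
  if in_square (printed_square m) (i, j) then Defs.one else blank.
Proof.
move=> le_r_i le_c_j; rewrite /template /=.
by congr (if _ then _ else _); apply/idP/idP => /andP[? ?]; apply/andP; lia.
Qed.

Lemma print_in_square x :
  in_square (printed_square m) x -> M x.1 x.2 = blank /\ M' x.1 x.2 = Defs.one.
Proof.
case: x => i j x_in; move: (x_in) => /andP[/= /andP[? ?] /andP[? ?]].
have lt_s_n := ltn_ord (mv_s m).
have area_i : mv_r m <= i < mv_r m + n by lia.
have area_j : mv_c m <= j < mv_c m + n by lia.
have [b []] := print_area_stack area_i area_j.
by rewrite template_in_area ?x_in //; case: b.
Qed.

Lemma print_out_square x : ~~ in_square (printed_square m) x -> M' x.1 x.2 = M x.1 x.2.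
Proof.
case: x => i j x_out /=.
have [/andP[area_i area_j]|] := boolP ((mv_r m <= i < mv_r m + n) && (mv_c m <= j < mv_c m + n)).
  have [b []] := print_area_stack area_i area_j.
  by rewrite template_in_area ?(negbTE x_out); [case: b => // -> ->|lia|lia].
exact: print_outside_area.
Qed.

End Printing.

Definition cover_count (P : seq square) (x : nat * nat) : nat := count (in_square^~ x) P.

Definition shows_cover (P : seq square) (M : cardmat) : Prop :=
  forall i j, cover_count P (i, j) <= 1 /\
              M i j = if cover_count P (i, j) == 0 then blank else Defs.one.

Lemma shows_cover_init : shows_cover [::] init_mat.
Proof. by []. Qed.

Lemma cover_count_rcons P q x : cover_count (rcons P q) x = cover_count P x + in_square q x.
Proof. by rewrite /cover_count -cats1 count_cat /= addn0. Qed.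

Lemma shows_cover_print P M n (m : move n) M' :
  shows_cover P M -> print M m = Some M' -> shows_cover (rcons P (printed_square m)) M'.
Proof.
move=> cover_M print_m i j; have [le_cnt_1 M_ij] := cover_M i j.
rewrite cover_count_rcons.
have [ij_in|ij_out] := boolP (in_square (printed_square m) (i, j)).
  have [M_blank ->] := print_in_square print_m ij_in.
  by move: M_ij; rewrite M_blank addn1; case: (cover_count P (i, j)).
by rewrite addn0 (print_out_square print_m ij_out).
Qed.

Lemma shows_cover_run n dots (ms : seq (move n)) i M F P :
  run_from n dots i M ms = Some F -> shows_cover P M ->
  shows_cover (P ++ map (@printed_square n) ms) F.
Proof.
elim: ms i M P => [|m ms IH] i M P /=; first by move=> [<-]; rewrite cats0.
case print_m: (print M m) => [M'|] //; case: ifP => // _ run_ms cover_M.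
by rewrite -cat_rcons; apply: IH run_ms (shows_cover_print cover_M print_m).
Qed.

Lemma dots_ok_print n dots i M (m : move n) M' :
  print M m = Some M' -> dots_ok dots i M -> dots_ok dots i.+1 M' -> i < size dots ->
  count (in_square (printed_square m)) dots = 1.
Proof.
move=> print_m /forallP dots_M /forallP dots_M' lt_i_dots.
apply: (@count_nth_eq1 _ (0, 0) _ _ _ lt_i_dots) => j lt_j_dots.
have dots_j := (dots_M (Ordinal lt_j_dots), dots_M' (Ordinal lt_j_dots)).
have [d_in|d_out] := boolP (in_square (printed_square m) (nth (0, 0) dots j));
  move: dots_j => /= [/eqP + /eqP].
  have [-> ->] := print_in_square print_m d_in.
  by case: ifP => // ? _; case: ifP => // ? _; apply/esym/eqP; lia.
rewrite (print_out_square print_m d_out) => ->.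
by case: ifP => ?; case: ifP => // ? _; apply/esym/eqP; lia.
Qed.

Lemma dots_ok_run n dots (ms : seq (move n)) i M F :
  run_from n dots i M ms = Some F -> dots_ok dots i M -> i + size ms = size dots ->
  forall q, q \in map (@printed_square n) ms -> count (in_square q) dots = 1.
Proof.
elim: ms i M => [|m ms IH] i M //=.
case print_m: (print M m) => [M'|] //; case: ifP => // dots_M' run_ms dots_M size_ms q.
rewrite in_cons => /predU1P[->|q_ms].
  by apply: dots_ok_print print_m dots_M dots_M' _; lia.
by apply: IH run_ms dots_M' _ q q_ms; lia.
Qed.

Lemma shows_cover_one P M q x :
  shows_cover P M -> q \in P -> in_square q x -> M x.1 x.2 = Defs.one.
Proof.
move=> cover_M q_in x_in; have [_ ->] := cover_M x.1 x.2.
suff : 0 < cover_count P x by case: x {x_in} => ? ?; case: cover_count.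
by rewrite -has_count; apply/hasP; exists q.
Qed.

Lemma final_okP n F i j : final_ok n F -> i < n + n.-1 -> j < n + n.-1 ->
  (F i j == Defs.one) = (i < n) && (j < n).
Proof.
move=> /forallP final_F lt_i lt_j.
move: (final_F (Ordinal lt_i)) => /forallP /(_ (Ordinal lt_j)) /eqP /= ->.
by case: ifP.
Qed.

Lemma cover_count_final n P F i j :
  shows_cover P F -> final_ok n F -> i < n -> j < n -> cover_count P (i, j) = 1.
Proof.
move=> cover_F final_F lt_i lt_j; have [le_cnt_1 F_ij] := cover_F i j.
have F_one : F i j = Defs.one by apply/eqP; rewrite (final_okP final_F) ?lt_i ?lt_j //; lia.
by move: F_ij le_cnt_1; rewrite F_one; case: cover_count => [|[]].
Qed.

(* The far corner of a printed square carries card 1, and the final check forbids a card 1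
   among the dummy cards. *)
Lemma printed_square_in_grid n F (ms : seq (move n)) q :
  shows_cover (map (@printed_square n) ms) F -> final_ok n F ->
  q \in map (@printed_square n) ms -> 0 < q.2 /\ q.1.1 + q.2 <= n /\ q.1.2 + q.2 <= n.
Proof.
move=> cover_F final_F q_ms; have [m q_m] := mem_map_exists q_ms; subst q.
have lt_r_n := ltn_ord (mv_r m); have lt_c_n := ltn_ord (mv_c m).
have lt_s_n := ltn_ord (mv_s m).
have corner_in : in_square (printed_square m) (mv_r m + mv_s m, mv_c m + mv_s m).
  by apply/andP; split; apply/andP; rewrite /=; lia.
move: (shows_cover_one cover_F q_ms corner_in) => /eqP.
by rewrite (final_okP final_F) /=; lia.
Qed.

Theorem lemma5 (n : nat) (dots : seq (nat * nat)) (ms : seq (move n)) :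
  uniq dots ->
  all (fun d => (d.1 < n) && (d.2 < n)) dots ->
  accepts n dots ms ->
  meadows_solution n dots (map (@printed_square n) ms).
Proof.
move=> _ _ /andP[/eqP size_ms].
case run_ms: (run_from n dots 0 init_mat ms) => [F|] // final_F.
have cover_F := shows_cover_run run_ms shows_cover_init.
split; [|split].
- by move=> q; apply: printed_square_in_grid cover_F final_F.
- by move=> i j; apply: cover_count_final cover_F final_F.
- by apply: dots_ok_run run_ms _ size_ms; apply/forallP.
Qed.
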